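(* Let $n,m\ge1$, $\mu>0$, $\nu>-1$, $D_{n,m}(\mu)=\{(z,w)\in\mathbb{C}^n\times\mathbb{C}^m:\|w\|^2<e^{-\mu\|z\|^2}\}$ and $\Phi(z,w)=\nu\mu\|z\|^2-\ln\left(e^{-\mu\|z\|^2}-\|w\|^2\right)$. Then for all $(z,w)\in D_{n,m}(\mu)$, $$\det\left(\frac{\partial^2\Phi}{\partial Z_i\partial\bar Z_j}\right)(z,w)=\frac{\mu^n\left[\nu+(1-\|\tilde w\|^2)^{-1}\right]^n}{(1-\|\tilde w\|^2)^{m+1}}e^{m\mu\|z\|^2},$$ where $(Z_1,\dots,Z_{n+m})=(z,w)$ and $\tilde w:=e^{\frac{\mu}{2}\|z\|^2}w$.
   Context: $\|\cdot\|$ is the standard Hermitian norm; the determinant is of the $(n+m)\times(n+m)$ complex Hessian matrix. *)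

From HB Require Import structures.
From mathcomp Require Import all_boot all_order all_algebra.
From mathcomp Require Import complex.
From mathcomp Require Import all_classical all_reals all_analysis.
Set Implicit Arguments. Unset Strict Implicit. Unset Printing Implicit Defensive.
Import Order.TTheory GRing.Theory Num.Theory.
Local Open Scope ring_scope.

(* A point Z of C^N is represented by its real coordinates (x, y),
   with Z_k = x_k + i y_k. *)
Definition cpt (R : realType) (N : nat) := ('rV[R]_N * 'rV[R]_N)%type.

Definition dirx (R : realType) (N : nat) (k : 'I_N) : cpt R N := (delta_mx 0 k, 0).
Definition diry (R : realType) (N : nat) (k : 'I_N) : cpt R N := (0, delta_mx 0 k).

Definition pd (R : realType) (N : nat) (f : cpt R N -> R) (v : cpt R N) : cpt R N -> R :=
  fun p => derive f p v.

(* complex Hessian (d^2 f / dZ_i d\bar Z_j)_{i,j}, via Wirtinger derivatives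
   d/dZ = (d/dx - i d/dy)/2, d/d\bar Z = (d/dx + i d/dy)/2 :
   d^2 f/dZ_i d\bar Z_j = 1/4 (f_{x_i x_j} + f_{y_i y_j}) + i/4 (f_{x_i y_j} - f_{y_i x_j}) *)
Definition cHess (R : realType) (N : nat) (f : cpt R N -> R) (p : cpt R N) : 'M[R[i]]_N :=
  \matrix_(i < N, j < N)
     Complex ((pd (pd f (@dirx R N j)) (@dirx R N i) p + pd (pd f (@diry R N j)) (@diry R N i) p) / 4)
             ((pd (pd f (@diry R N j)) (@dirx R N i) p - pd (pd f (@dirx R N j)) (@diry R N i) p) / 4).

Definition nz2 (R : realType) (n m : nat) (p : cpt R (n + m)) : R :=
  \sum_(k < n) (p.1 0 (lshift m k) ^+ 2 + p.2 0 (lshift m k) ^+ 2).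
Definition nw2 (R : realType) (n m : nat) (p : cpt R (n + m)) : R :=
  \sum_(k < m) (p.1 0 (rshift n k) ^+ 2 + p.2 0 (rshift n k) ^+ 2).

Definition Dnm (R : realType) (n m : nat) (mu : R) : set (cpt R (n + m)) :=
  [set p | nw2 p < expR (- (mu * nz2 p))].

Definition Phi (R : realType) (n m : nat) (mu nu : R) (p : cpt R (n + m)) : R :=
  nu * mu * nz2 p - ln (expR (- (mu * nz2 p)) - nw2 p).

From HB Require Import structures.
From mathcomp Require Import all_boot all_order all_algebra.
From mathcomp Require Import complex.
From mathcomp Require Import all_classical all_reals all_analysis.
From mathcomp Require Import ring.
Import Order.TTheory GRing.Theory Num.Theory.
Import numFieldNormedType.Exports.
Local Open Scope ring_scope.

Set Implicit Arguments.
Unset Strict Implicit.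
Unset Printing Implicit Defensive.

(* With psi = e^{-mu|z|^2} - |w|^2 and lam_j = mu e^{-mu|z|^2} on z-coordinates,
   lam_j = 1 on w-coordinates, one has d psi / d bar Z_j = - lam_j Z_j, so the complex
   Hessian of Phi is a diagonal matrix plus a Hermitian perturbation of rank two:
     H_ij = delta_ij (nu mu [j in z] + lam_j / psi)
            + (lam_i lam_j / psi^2 - mu^2 e^{-mu|z|^2} [i, j in z] / psi) conj(Z_i) Z_j.
   The identity det (D + U V) = det D * det (1 + V D^-1 U) reduces its determinant to
   that of a 2 x 2 matrix, which collapses to e^{-mu|z|^2} / psi because
   |w|^2 = e^{-mu|z|^2} - psi. *)

Lemma det1D_mulmxC (F : comRingType) k l (A : 'M[F]_(k, l)) (B : 'M[F]_(l, k)) :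
  \det (1%:M + A *m B) = \det (1%:M + B *m A).
Proof.
have E1 : block_mx 1%:M 0 (- B) 1%:M *m block_mx 1%:M A 0 (1%:M + B *m A)
        = block_mx 1%:M A (- B) 1%:M.
  by rewrite mulmx_block !mul1mx !mulmx1 ?mul0mx ?mulmx0 ?addr0 ?add0r mulNmx addrC addrK.
have E2 : block_mx (1%:M + A *m B) A 0 1%:M *m block_mx 1%:M 0 (- B) 1%:M
        = block_mx 1%:M A (- B) 1%:M.
  by rewrite mulmx_block !mul1mx !mulmx1 ?mul0mx ?mulmx0 ?addr0 ?add0r mulmxN addrK.
have := congr1 determinant E2; rewrite -{}E1 !det_mulmx !det_lblock !det_ublock !det1.
by rewrite !mul1r !mulr1 => ->.
Qed.

Lemma det_mx2 (F : comRingType) (A : 'M[F]_2) : \det A = A 0 0 * A 1 1 - A 0 1 * A 1 0.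
Proof.
rewrite (expand_det_row _ 0) !big_ord_recl big_ord0 addr0 /cofactor !det_mx11 !mxE /=.
rewrite expr0 expr1 mul1r mulN1r mulrN.
by congr (A _ _ * A _ _ - A _ _ * A _ _); apply: val_inj.
Qed.

Lemma det_diagD_mulmx (F : fieldType) N k
    (d : 'rV[F]_N) (U : 'M[F]_(N, k)) (V : 'M[F]_(k, N)) :
  (forall i, d 0 i != 0) ->
  \det (diag_mx d + U *m V)
  = \prod_i d 0 i * \det (1%:M + V *m (diag_mx (\row_i (d 0 i)^-1) *m U)).
Proof.
move=> d_neq0.
have -> : diag_mx d + U *m V
    = diag_mx d *m (1%:M + (diag_mx (\row_i (d 0 i)^-1) *m U) *m V).
  rewrite mulmxDr mulmx1 !mulmxA; congr (_ + _ *m _).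
  rewrite -mulmxA mul_diag_mx; apply/matrixP => i j; rewrite !mxE.
  under eq_bigr do rewrite !mxE.
  rewrite (bigD1 i) //= big1 ?addr0 => [|l /negPf]; last first.
    by rewrite eq_sym => ->; rewrite mulr0n mul0r.
  by rewrite eqxx mulr1n mulrA mulfV ?mul1r.
by rewrite det_mulmx det_diag det1D_mulmxC.
Qed.

Section DirectionalDerivative.
Variables (R : realType) (V : normedModType R).
Implicit Types (f : V -> R) (q v : V).

Lemma derive_line f q v : 'D_v f q = 'D_1 (fun h : R => f (h *: v + q)) 0.
Proof.
rewrite /derive /=.
suff -> : (fun h : R => h^-1 *: (f ((h *: (1:R) + 0) *: v + q) - f (0 *: v + q)))
   = (fun h : R => h^-1 *: (f (h *: v + q) - f q)) by [].
by apply: funext => h; rewrite scale0r add0r addr0 [_ *: (1:R)]mulr1.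
Qed.

Lemma is_derive_line f (g : R -> R) q v (d : R) :
  (forall h, f (h *: v + q) = g h) -> is_derive (0 : R) 1 g d -> is_derive q v f d.
Proof.
move=> fg; rewrite -(funext fg) => -[dg <-].
by split; [exact/derivable1P | rewrite derive_line].
Qed.

Lemma is_derive_comp f (g : R -> R) q v df dg :
  is_derive q v f df -> is_derive (f q) 1 g dg -> is_derive q v (g \o f) (dg * df).
Proof.
move=> [fv <-] gd; apply: (is_derive_line (g := g \o fun h : R => f (h *: v + q))) => //.
have fl : is_derive (0 : R) 1 (fun h : R => f (h *: v + q)) ('D_v f q).
  by split; [exact/(derivable1P _ _ _).1 | rewrite -derive_line].
by apply: is_derive1_comp; rewrite scale0r add0r.
Qed.

Lemma is_derive_inv f q v df : f q != 0 -> is_derive q v f df ->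
  is_derive q v (fun r => (f r)^-1) (- (f q) ^- 2 * df).
Proof. by move=> fq0 [fv <-]; split; [exact: derivableV | rewrite deriveV]. Qed.

End DirectionalDerivative.

Section RealCoordinates.
Variables (R : realType) (N : nat).
Implicit Types (c : 'I_N -> R) (q v w : cpt R N).

(* The real part of [\sum_k c_k conj(Q_k) W_k]. *)
Definition hform c q w :=
  \sum_(k < N) c k * (q.1 0 k * w.1 0 k + q.2 0 k * w.2 0 k).

Lemma hform_line c (h : R) q v w :
  hform c (h *: v + q) w = h * hform c v w + hform c q w.
Proof.
rewrite /hform mulr_sumr -big_split; apply: eq_bigr => k _ /=.
rewrite !mxE; ring.
Qed.

Lemma hform_line_sq c (h : R) q v :
  hform c (h *: v + q) (h *: v + q)
  = hform c q q + h * (hform c q v + hform c v q) + h ^+ 2 * hform c v v.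
Proof.
rewrite /hform -big_split !mulr_sumr -!big_split; apply: eq_bigr => k _ /=.
rewrite !mxE; ring.
Qed.

Lemma hformC c q w : hform c q w = hform c w q.
Proof. by rewrite /hform; apply: eq_bigr => k _; ring. Qed.

Lemma is_derive_hforml c q v w : is_derive q v (hform c ^~ w) (hform c v w).
Proof.
apply: (is_derive_line (fun h => hform_line c h q v w)).
by apply: is_derive_eq; rewrite /GRing.scale /=; ring.
Qed.

Lemma is_derive_hform_sq c q v :
  is_derive q v (fun r => hform c r r) (2 * hform c q v).
Proof.
apply: (is_derive_line (fun h => hform_line_sq c h q v)).
by apply: is_derive_eq; rewrite /GRing.scale /= (hformC c v); ring.
Qed.

Lemma hform_sq_continuous c : continuous (fun q => hform c q q).
Proof.
move=> q.
have coord (f : cpt R N -> 'rV[R]_N) k : {for q, continuous f} ->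
    {for q, continuous (fun r => f r 0 k)}.
  by move=> fc; apply: continuous_comp fc (@coord_continuous R _ _ 0 k _).
have -> : (fun r => hform c r r) = \sum_(k < N) fun r : cpt R N =>
    c k * (r.1 0 k * r.1 0 k + r.2 0 k * r.2 0 k).
  by apply: funext => r; rewrite fct_sumE.
apply: (big_ind (fun f : cpt R N -> R => {for q, continuous f})).
- exact: cvg_cst.
- by move=> f g fc gc; apply: cvgD.
- move=> k _; apply: cvgMl_tmp.
  by apply: cvgD; apply: cvgM; apply: coord; [exact: cvg_fst|exact: cvg_fst
                                               |exact: cvg_snd|exact: cvg_snd].
Qed.

Lemma dirx1E (i k : 'I_N) : (dirx R i).1 0 k = (k == i)%:R.
Proof. by rewrite /dirx /= mxE. Qed.
Lemma dirx2E (i k : 'I_N) : (dirx R i).2 0 k = 0.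
Proof. by rewrite /dirx /= mxE. Qed.
Lemma diry1E (i k : 'I_N) : (diry R i).1 0 k = 0.
Proof. by rewrite /diry /= mxE. Qed.
Lemma diry2E (i k : 'I_N) : (diry R i).2 0 k = (k == i)%:R.
Proof. by rewrite /diry /= mxE. Qed.

Lemma hform_dirx c q j : hform c q (dirx R j) = c j * q.1 0 j.
Proof.
rewrite /hform (bigD1 j) // big1 => [|k /negPf kj]; rewrite dirx1E dirx2E ?eqxx ?kj /=.
  by rewrite mulr1 mulr0 !addr0.
by rewrite !mulr0 addr0 mulr0.
Qed.

Lemma hform_diry c q j : hform c q (diry R j) = c j * q.2 0 j.
Proof.
rewrite /hform (bigD1 j) // big1 => [|k /negPf kj]; rewrite diry1E diry2E ?eqxx ?kj /=.
  by rewrite mulr1 mulr0 add0r addr0.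
by rewrite !mulr0 addr0 mulr0.
Qed.

Lemma cHessE (f : cpt R N -> R) p (E : cpt R N -> cpt R N -> R) :
  (forall v u, pd (pd f v) u p = E v u) -> forall i j,
  cHess f p i j = ((E (dirx R j) (dirx R i) + E (diry R j) (diry R i)) / 4
                  +i* ((E (diry R j) (dirx R i) - E (dirx R j) (diry R i)) / 4))%C.
Proof. by move=> fE i j; rewrite /cHess mxE !fE. Qed.

End RealCoordinates.

Section Masks.
Variables (R : realType) (n m : nat).
Implicit Types (p : cpt R (n + m)) (F : R -> R -> R).

(* Coordinate-dependent coefficients are written as functions of the masks of the
   coordinate: (1, 0) on z, (0, 1) on w. *)
Definition zmask (k : 'I_(n + m)) : R := (k < n)%:R.
Definition wmask (k : 'I_(n + m)) : R := (n <= k)%:R.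

Lemma masks_lshift (k : 'I_n) : zmask (lshift m k) = 1 /\ wmask (lshift m k) = 0.
Proof. by rewrite /zmask /wmask /= ltn_ord leqNgt ltn_ord. Qed.

Lemma masks_rshift (k : 'I_m) : zmask (rshift n k) = 0 /\ wmask (rshift n k) = 1.
Proof. by rewrite /zmask /wmask /= leq_addr ltnNge leq_addr. Qed.

Lemma sum_masks F p :
  \sum_i F (zmask i) (wmask i) * (p.1 0 i ^+ 2 + p.2 0 i ^+ 2)
  = F 1 0 * nz2 p + F 0 1 * nw2 p.
Proof.
rewrite big_split_ord /nz2 /nw2 !mulr_sumr; congr (_ + _); apply: eq_bigr => k _.
  by case: (masks_lshift k) => -> ->.
by case: (masks_rshift k) => -> ->.
Qed.

Lemma prod_masks F : \prod_i F (zmask i) (wmask i) = F 1 0 ^+ n * F 0 1 ^+ m.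
Proof.
rewrite big_split_ord -[n in F 1 0 ^+ n]card_ord -[m in F 0 1 ^+ m]card_ord.
rewrite -!prodr_const; congr (_ * _); apply: eq_bigr => k _.
  by case: (masks_lshift k) => -> ->.
by case: (masks_rshift k) => -> ->.
Qed.

Lemma masksP i : (zmask i = 1 /\ wmask i = 0) \/ (zmask i = 0 /\ wmask i = 1).
Proof. by rewrite /zmask /wmask; case: ltnP => _; [left|right]. Qed.

Lemma nz2E p : nz2 p = hform zmask p p.
Proof.
rewrite /hform; under eq_bigr do rewrite -!expr2.
by rewrite (sum_masks (fun a _ => a)) mul1r mul0r addr0.
Qed.

Lemma nw2E p : nw2 p = hform wmask p p.
Proof.
rewrite /hform; under eq_bigr do rewrite -!expr2.
by rewrite (sum_masks (fun _ b => b)) mul1r mul0r add0r.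
Qed.

End Masks.

Section PhiDerivatives.
Variables (R : realType) (n m : nat) (mu nu : R).
Local Notation N := (n + m)%N.
Local Notation hz := (hform (@zmask R n m)).
Local Notation hw := (hform (@wmask R n m)).
Implicit Types (q u v : cpt R N).

Definition gaussz q := expR (- (mu * hz q q)).
Definition psi q := gaussz q - hw q q.

Definition dpsi q v := - (2 * mu * gaussz q * hz q v) - 2 * hw q v.
Definition d2psi q u v :=
  4 * mu ^+ 2 * gaussz q * hz q u * hz q v - 2 * mu * gaussz q * hz u v - 2 * hw u v.
Definition dPhi q v := 2 * nu * mu * hz q v - dpsi q v / psi q.
Definition d2Phi q v u :=
  2 * nu * mu * hz u v - d2psi q u v / psi q + dpsi q u * dpsi q v / psi q ^+ 2.

Lemma PhiE : Phi mu nu = fun q => nu * mu * hz q q - ln (psi q).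
Proof. by apply: funext => q; rewrite /Phi /psi /gaussz nz2E nw2E. Qed.

Lemma is_derive_gaussz q v :
  is_derive q v gaussz (- (2 * mu * gaussz q * hz q v)).
Proof.
have hd : is_derive q v (fun r => - (mu * hz r r)) (- (mu * (2 * hz q v))).
  have hz2 := is_derive_hform_sq (@zmask R n m) q v.
  by apply: is_derive_eq; rewrite /GRing.scale /=; ring.
by apply: is_derive_eq (is_derive_comp hd (is_derive_expR _)) _; rewrite /gaussz; ring.
Qed.

Lemma is_derive_psi q v : is_derive q v psi (dpsi q v).
Proof. exact: is_deriveB (is_derive_gaussz q v) (is_derive_hform_sq _ q v). Qed.

Lemma is_derive_dpsi q u v : is_derive q u (dpsi ^~ v) (d2psi q u v).
Proof.
have hg := is_derive_gaussz q u.
have hzl := is_derive_hforml (@zmask R n m) q u v.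
have hwl := is_derive_hforml (@wmask R n m) q u v.
by apply: is_derive_eq; rewrite /GRing.scale /= /d2psi; ring.
Qed.

Lemma is_derive_Phi q v : 0 < psi q -> is_derive q v (Phi mu nu) (dPhi q v).
Proof.
move=> psi_gt0; rewrite PhiE.
have hl := is_derive_comp (is_derive_psi q v) (is_derive1_ln psi_gt0).
have hz2 := is_derive_hform_sq (@zmask R n m) q v.
by apply: is_derive_eq; rewrite /GRing.scale /= /dPhi; ring.
Qed.

Lemma is_derive_dPhi q v u : 0 < psi q -> is_derive q u (dPhi ^~ v) (d2Phi q v u).
Proof.
move=> psi_gt0.
have hinv := is_derive_inv (lt0r_neq0 psi_gt0) (is_derive_psi q u).
have hdpsi := is_derive_dpsi q u v.
have hzl := is_derive_hforml (@zmask R n m) q u v.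
by apply: is_derive_eq; rewrite /GRing.scale /= /d2Phi; field; rewrite gt_eqF.
Qed.

Lemma psi_continuous : continuous psi.
Proof.
move=> q; apply: cvgB; last exact: hform_sq_continuous.
apply: (@continuous_comp _ _ _ (fun q => - (mu * hz q q)) expR).
  by apply: cvgN; apply: cvgMl_tmp; exact: hform_sq_continuous.
exact: continuous_expR.
Qed.

Lemma pd2PhiE p v u : 0 < psi p -> pd (pd (Phi mu nu) v) u p = d2Phi p v u.
Proof.
move=> psi_gt0; rewrite /pd.
have -> : derive (fun q => derive (Phi mu nu) q v) p u = derive (dPhi ^~ v) p u.
  apply: near_eq_derive; near=> q.
  have psi_q : 0 < psi q.
    by near: q; exact: (@cvgr_gt R _ (nbhs p) _ psi _ (@psi_continuous p) 0 psi_gt0).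
  by have [_ ->] := is_derive_Phi v psi_q.
by have [_ ->] := is_derive_dPhi v u psi_gt0.
Unshelve. all: by end_near.
Qed.

End PhiDerivatives.

Section HessianEntries.
Variables (R : realType) (n m : nat) (mu nu : R) (p : cpt R (n + m)).
Hypothesis psi_gt0 : 0 < psi mu p.
Local Notation N := (n + m)%N.
Local Notation A := (gaussz mu p).
Local Notation P := (psi mu p).
Local Notation zm := (@zmask R n m).
Local Notation wm := (@wmask R n m).

Definition lam (a b : R) := mu * A * a + b.
Definition diagc (a b : R) := nu * mu * a + lam a b / P.
Definition offc (i j : 'I_N) :=
  lam (zm i) (wm i) * lam (zm j) (wm j) / P ^+ 2
  - mu ^+ 2 * A * zm i * zm j / P.
Definition zcoord (i : 'I_N) : R[i] := (p.1 0 i +i* p.2 0 i)%C.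

Lemma cHess_PhiE (i j : 'I_N) :
  cHess (Phi mu nu) p i j
  = (diagc (zm i) (wm i))%:C%C *+ (i == j) + (offc i j)%:C%C * ((zcoord i)^*%C * zcoord j).
Proof.
rewrite (cHessE (fun v u => pd2PhiE nu v u psi_gt0)) /d2Phi /d2psi /dpsi.
rewrite !hform_dirx !hform_diry ?dirx1E ?dirx2E ?diry1E ?diry2E.
have P_neq0 : P != 0 := lt0r_neq0 psi_gt0.
rewrite /zcoord /offc /diagc /lam -!complexr0.
by case: (eqVneq i j) => [<-|_]; rewrite ?mulr1n ?mulr0n ?add0r; simpc;
  congr Complex; field.
Qed.

Definition dvec : 'rV[R[i]]_N := \row_i (diagc (zm i) (wm i))%:C%C.
Definition ucols : 'M[R[i]]_(N, 2) := \matrix_(i, k)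
  ((if k == 0 then lam (zm i) (wm i) / P ^+ 2
    else - (mu ^+ 2 * A * zm i / P))%:C * (zcoord i)^*)%C.
Definition vrows : 'M[R[i]]_(2, N) := \matrix_(k, j)
  ((if k == 0 then lam (zm j) (wm j) else zm j)%:C * zcoord j)%C.

Lemma cHess_Phi_lowrank : cHess (Phi mu nu) p = diag_mx dvec + ucols *m vrows.
Proof.
apply/matrixP => i j; rewrite cHess_PhiE !mxE big_ord_recl big_ord1 !mxE /=.
congr (_ + _); rewrite /offc /zcoord -!complexr0; simpc.
by congr Complex; ring.
Qed.

End HessianEntries.

Section Determinant.
Variables (R : realType) (n m : nat) (mu nu : R) (p : cpt R (n + m)).
Hypotheses (psi_gt0 : 0 < psi mu p) (mu_gt0 : 0 < mu) (nu_gtN1 : -1 < nu).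
Local Notation N := (n + m)%N.
Local Notation A := (gaussz mu p).
Local Notation P := (psi mu p).
Local Notation zm := (@zmask R n m).
Local Notation wm := (@wmask R n m).
Local Notation lam := (lam mu p).
Local Notation diagc := (diagc mu nu p).

Let P_neq0 : P != 0. Proof. exact: lt0r_neq0. Qed.

Lemma diagc_z_gt0 : 0 < diagc 1 0.
Proof.
have hwE : hform wm p p = A - P by rewrite /psi; ring.
have hw_ge0 : 0 <= hform wm p p.
  apply: sumr_ge0 => i _; rewrite mulr_ge0 ?ler0n //.
  by rewrite addr_ge0 // -expr2 sqr_ge0.
have -> : diagc 1 0 = mu * ((nu + 1) + hform wm p p / P).
  by rewrite hwE /diagc /lam; field.
have hwP_ge0 : 0 <= hform wm p p / P by rewrite divr_ge0 // ltW.
by rewrite mulr_gt0 // -[0]addr0 ltr_leD // -ltrBlDr sub0r.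
Qed.

Lemma diagc_masks_neq0 i : diagc (zm i) (wm i) != 0.
Proof.
case: (masksP R i) => -[-> ->]; first by rewrite gt_eqF ?diagc_z_gt0.
by rewrite /diagc /lam !mulr0 !add0r div1r invr_neq0.
Qed.

Definition capacitance_coef (k l : 'I_2) (a b : R) :=
  (if k == 0 then lam a b else a) / diagc a b
  * (if l == 0 then lam a b / P ^+ 2 else - (mu ^+ 2 * A * a / P)).

Lemma capacitance_mxE k l :
  (1%:M + vrows mu p *m (diag_mx (\row_i ((dvec mu nu p) 0 i)^-1) *m ucols mu p)) k l
  = ((k == l)%:R + capacitance_coef k l 1 0 * nz2 p
     + capacitance_coef k l 0 1 * nw2 p)%:C%C.
Proof.
rewrite mul_diag_mx !mxE -addrA -(sum_masks (capacitance_coef k l)) rmorphD rmorph_nat.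
rewrite rmorph_sum; congr (_ + _); apply: eq_bigr => i _.
rewrite !mxE -fmorphV /capacitance_coef /zcoord.
by case: (k == 0); case: (l == 0); rewrite -!complexr0; simpc; congr Complex; ring.
Qed.

Lemma det_cHess_Phi :
  \det (cHess (Phi mu nu) p) = (diagc 1 0 ^+ n * diagc 0 1 ^+ m * (A / P))%:C%C.
Proof.
rewrite (cHess_Phi_lowrank nu psi_gt0) det_diagD_mulmx => [|i]; last first.
  by rewrite mxE; apply/eqP => -[]; apply/eqP/diagc_masks_neq0.
under eq_bigr do rewrite mxE.
rewrite det_mx2 !capacitance_mxE -rmorph_prod prod_masks -!rmorphM -rmorphB -rmorphM.
congr (_%:C)%C; congr (_ * _).
have hwE : nw2 p = A - P by rewrite nw2E /psi; ring.
have DzP : nu * mu * P + mu * A = diagc 1 0 * P by rewrite /diagc /lam; field.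
rewrite hwE /capacitance_coef /= /diagc /lam.
by field; rewrite P_neq0 DzP mulf_neq0 // lt0r_neq0 ?diagc_z_gt0.
Qed.

Lemma det_cHess_Phi_expR :
  \det (cHess (Phi mu nu) p) =
  (mu ^+ n * (nu + (1 - expR (mu * nz2 p) * nw2 p)^-1) ^+ n
     / (1 - expR (mu * nz2 p) * nw2 p) ^+ m.+1 * expR (m%:R * mu * nz2 p))%:C%C.
Proof.
rewrite det_cHess_Phi; congr (_%:C)%C.
set E := expR (mu * nz2 p).
have E_neq0 : E != 0 by rewrite gt_eqF ?expR_gt0.
have AE : A = E^-1 by rewrite /gaussz -nz2E expRN.
have wE : 1 - E * nw2 p = E * P by rewrite /psi AE nw2E; field.
have ExpE : expR (m%:R * mu * nz2 p) = E ^+ m by rewrite -mulrA expRM_natl.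
have D1 : diagc 1 0 = mu * (nu + (E * P)^-1).
  by rewrite /diagc /lam AE; field; rewrite E_neq0 P_neq0.
have D0 : diagc 0 1 = P^-1 by rewrite /diagc /lam; ring.
rewrite wE ExpE D1 D0 AE exprS !exprMn exprVn.
by field; rewrite !expf_neq0 ?P_neq0 ?E_neq0.
Qed.

End Determinant.

Unset Implicit Arguments.

Theorem lemma2p3 (R : realType) (n m : nat) (mu nu : R) :
  (0 < n)%N -> (0 < m)%N -> 0 < mu -> -1 < nu ->
  forall p : cpt R (n + m), p \in @Dnm R n m mu ->
  \det (cHess (@Phi R n m mu nu) p) =
  Complex (mu ^+ n * (nu + (1 - expR (mu * @nz2 R n m p) * @nw2 R n m p)^-1) ^+ n
             / (1 - expR (mu * @nz2 R n m p) * @nw2 R n m p) ^+ m.+1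
             * expR (m%:R * mu * @nz2 R n m p)) 0.
Proof.
move=> _ _ mu_gt0 nu_gtN1 p; rewrite inE /Dnm /= => p_in.
have psi_gt0 : 0 < psi mu p by rewrite /psi /gaussz -nz2E -nw2E subr_gt0.
exact: det_cHess_Phi_expR.
Qed.
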